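(* Let $N > n > m$ be positive integers and let $p(w) = c_N w^N + \sum_{k=m}^n c_k w^k + c_0$ be a polynomial with complex coefficients, where $c_0 \neq 0$ and $c_N \neq 0$. Define \[ R_1 := \max\left\{ 1, \frac{1}{|c_N|}\left(|c_0| + \sum_{k=m}^{n} |c_k|\right)\right\}, \qquad R_0 := \min\left\{ 1, \frac{|c_0|}{|c_N| + \sum_{k=m}^n |c_k|}\right\}. \] Then every root $w \in \mathbb{C}$ of $p$ satisfies $R_0^{1/m} \leq |w| \leq R_1^{1/(N-n)}$. *)

From Stdlib Require Export Reals.
From Coquelicot Require Export Coquelicot.

Open Scope R_scope.

Definition poly_p (N n m : nat) (cN c0 : C) (c : nat -> C) (w : C) : C :=
  Cplus (Cplus (Cmult cN (Cpow w N))
               (sum_n_m (fun k => Cmult (c k) (Cpow w k)) m n)) c0.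

Definition bigR1 (n m : nat) (cN c0 : C) (c : nat -> C) : R :=
  Rmax 1 ((Cmod c0 + sum_n_m (fun k => Cmod (c k)) m n) / Cmod cN).

Definition smallR0 (n m : nat) (cN c0 : C) (c : nat -> C) : R :=
  Rmin 1 (Cmod c0 / (Cmod cN + sum_n_m (fun k => Cmod (c k)) m n)).

(* Put r = |w|.  From p(w) = 0 the triangle inequality gives
     |c_N| r^N <= sum_k |c_k| r^k + |c_0|   and   |c_0| <= |c_N| r^N + sum_k |c_k| r^k.
   If r > 1, every r^k with k <= n is at most r^n, and dividing the first inequality by
   r^n yields |c_N| r^(N-n) <= |c_0| + sum_k |c_k|.  If r < 1, every r^k with k >= m is
   at most r^m, and the second inequality yields |c_0| <= (|c_N| + sum_k |c_k|) r^m.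
   Hence r^(N-n) <= R_1 and R_0 <= r^m whatever r is, and it remains to take roots. *)
From Stdlib Require Import Reals Lra Lia.
From Coquelicot Require Import Coquelicot.
Open Scope R_scope.

Lemma sum_n_m_le_loc (a b : nat -> R) (m n : nat) :
  (forall k, (m <= k <= n)%nat -> a k <= b k) ->
  sum_n_m a m n <= sum_n_m b m n.
Proof.
  destruct (Nat.le_gt_cases m n) as [Hmn | Hnm]; intros Hab.
  - revert Hab. induction Hmn as [| n Hmn IH]; intros Hab.
    + rewrite !sum_n_n. apply Hab; lia.
    + rewrite !sum_n_Sm by lia.
      apply Rplus_le_compat.
      * apply IH. intros k Hk. apply Hab; lia.
      * apply Hab; lia.
  - rewrite !sum_n_m_zero by lia. apply Rle_refl.
Qed.

Lemma Rle_pow_le1 (r : R) (m k : nat) :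
  0 <= r <= 1 -> (m <= k)%nat -> r ^ k <= r ^ m.
Proof.
  intros Hr Hmk.
  replace k with (m + (k - m))%nat by lia.
  rewrite pow_add.
  rewrite <- (Rmult_1_r (r ^ m)) at 2.
  apply Rmult_le_compat_l; [apply pow_le; lra |].
  rewrite <- (pow1 (k - m)). apply pow_incr; lra.
Qed.

Lemma Rpower_pow_inv (r : R) (k : nat) :
  0 < r -> (0 < k)%nat -> Rpower (r ^ k) (/ INR k) = r.
Proof.
  intros Hr Hk.
  rewrite <- Rpower_pow, Rpower_mult, Rinv_r by (lra || (apply not_0_INR; lia)).
  apply Rpower_1, Hr.
Qed.

Lemma le_Rpower_inv (r R : R) (k : nat) :
  0 <= r -> 0 < R -> (0 < k)%nat -> r ^ k <= R -> r <= Rpower R (/ INR k).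
Proof.
  intros Hr HR Hk HrR.
  destruct Hr as [Hr | <-]; [| apply Rlt_le, exp_pos].
  rewrite <- (Rpower_pow_inv r k) at 1 by assumption.
  apply Rle_Rpower_l; [apply Rlt_le, Rinv_0_lt_compat, lt_0_INR; lia |].
  split; [apply pow_lt |]; assumption.
Qed.

Lemma Rpower_inv_le (r R : R) (k : nat) :
  0 <= r -> 0 < R -> (0 < k)%nat -> R <= r ^ k -> Rpower R (/ INR k) <= r.
Proof.
  intros Hr HR Hk HRr.
  assert (Hrpos : 0 < r).
  { destruct Hr as [Hr | <-]; [exact Hr |].
    rewrite pow_i in HRr by lia. lra. }
  rewrite <- (Rpower_pow_inv r k) by assumption.
  apply Rle_Rpower_l; [apply Rlt_le, Rinv_0_lt_compat, lt_0_INR; lia | lra].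
Qed.

Lemma Cmod_le_of_add3_eq0 (x y z : C) :
  (x + y + z = 0)%C -> Cmod x <= Cmod y + Cmod z.
Proof.
  intros Hsum.
  replace x with (- (y + z))%C.
  - rewrite Cmod_opp. apply Cmod_triangle.
  - rewrite <- (Cplus_0_l (- (y + z))), <- Hsum. ring.
Qed.

Lemma Cmod_sum_monomials_le (c : nat -> C) (w : C) (m n : nat) (t : R) :
  (forall k, (m <= k <= n)%nat -> Cmod w ^ k <= t) ->
  Cmod (sum_n_m (fun k => c k * w ^ k)%C m n)
  <= sum_n_m (fun k => Cmod (c k)) m n * t.
Proof.
  intros Hpow.
  eapply Rle_trans; [apply (norm_sum_n_m (K := C_AbsRing) (V := C_NormedModule)) |].
  rewrite <- (sum_n_m_mult_r (K := R_Ring)).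
  apply sum_n_m_le_loc. intros k Hk.
  change (Cmod (c k * w ^ k)%C <= Cmod (c k) * t).
  rewrite Cmod_mult, Cmod_pow.
  apply Rmult_le_compat_l; [apply Cmod_ge_0 | apply Hpow, Hk].
Qed.

Lemma sum_n_m_Cmod_ge0 (c : nat -> C) (m n : nat) :
  0 <= sum_n_m (fun k => Cmod (c k)) m n.
Proof.
  eapply Rle_trans.
  - right. symmetry. apply (sum_n_m_const_zero (G := R_AbelianMonoid) m n).
  - apply sum_n_m_le_loc. intros k _. apply Cmod_ge_0.
Qed.

Section RootModulusBounds.

Variables (N n m : nat) (cN c0 : C) (c : nat -> C) (w : C).
Hypotheses (Hmn : (m <= n)%nat) (HnN : (n <= N)%nat) (HcN : cN <> 0%C)
  (Hroot : poly_p N n m cN c0 c w = 0%C).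

Let S := sum_n_m (fun k => Cmod (c k)) m n.

Lemma root_modulus_pow_le_bigR1 : Cmod w ^ (N - n) <= bigR1 n m cN c0 c.
Proof.
  unfold bigR1. fold S.
  assert (Hr : 0 <= Cmod w) by apply Cmod_ge_0.
  assert (Ha : 0 < Cmod cN) by (apply Cmod_gt_0, HcN).
  destruct (Rle_lt_dec (Cmod w) 1) as [Hr1 | Hr1].
  - eapply Rle_trans; [| apply Rmax_l].
    rewrite <- (pow_O (Cmod w)). apply Rle_pow_le1; [split; lra | lia].
  - eapply Rle_trans; [| apply Rmax_r].
    apply Rle_div_r; [exact Ha |].
    assert (Hlead : Cmod cN * Cmod w ^ N <= S * Cmod w ^ n + Cmod c0).
    { rewrite <- Cmod_pow, <- Cmod_mult.
      eapply Rle_trans; [apply Cmod_le_of_add3_eq0, Hroot |].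
      apply Rplus_le_compat_r, Cmod_sum_monomials_le.
      intros k Hk. apply Rle_pow; lra || lia. }
    assert (Hrn : 1 <= Cmod w ^ n) by (apply pow_R1_Rle; lra).
    replace N with (N - n + n)%nat in Hlead by lia.
    rewrite pow_add in Hlead.
    assert (Hc0 : Cmod c0 <= Cmod c0 * Cmod w ^ n).
    { pose proof (Cmod_ge_0 c0). nra. }
    apply (Rmult_le_reg_r (Cmod w ^ n)); lra.
Qed.

Lemma smallR0_le_root_modulus_pow : smallR0 n m cN c0 c <= Cmod w ^ m.
Proof.
  unfold smallR0. fold S.
  assert (Hr : 0 <= Cmod w) by apply Cmod_ge_0.
  assert (Ha : 0 < Cmod cN) by (apply Cmod_gt_0, HcN).
  assert (HS : 0 <= S) by apply sum_n_m_Cmod_ge0.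
  destruct (Rle_lt_dec 1 (Cmod w)) as [Hr1 | Hr1].
  - eapply Rle_trans; [apply Rmin_l | apply pow_R1_Rle, Hr1].
  - eapply Rle_trans; [apply Rmin_r |].
    apply Rle_div_l; [lra |].
    assert (Hconst : Cmod c0 <= Cmod cN * Cmod w ^ N + S * Cmod w ^ m).
    { assert (Hsum : (c0 + cN * w ^ N + sum_n_m (fun k => c k * w ^ k) m n = 0)%C).
      { rewrite <- Hroot. unfold poly_p. ring. }
      eapply Rle_trans; [apply Cmod_le_of_add3_eq0, Hsum |].
      rewrite Cmod_mult, Cmod_pow.
      apply Rplus_le_compat_l, Cmod_sum_monomials_le.
      intros k Hk. apply Rle_pow_le1; [split; lra | lia]. }
    assert (HrN : Cmod w ^ N <= Cmod w ^ m) by (apply Rle_pow_le1; [split; lra | lia]).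
    nra.
Qed.

End RootModulusBounds.

Theorem proposition2p1 (N n m : nat) (cN c0 : C) (c : nat -> C) (w : C) :
  (0 < m)%nat -> (m < n)%nat -> (n < N)%nat ->
  c0 <> 0%C -> cN <> 0%C ->
  poly_p N n m cN c0 c w = 0%C ->
  Rpower (smallR0 n m cN c0 c) (/ INR m) <= Cmod w /\
  Cmod w <= Rpower (bigR1 n m cN c0 c) (/ INR (N - n)).
Proof.
  intros Hm Hmn HnN Hc0 HcN Hroot.
  split.
  - apply Rpower_inv_le; [apply Cmod_ge_0 | | exact Hm |].
    + unfold smallR0. apply Rmin_pos; [lra |].
      apply Rdiv_lt_0_compat; [apply Cmod_gt_0, Hc0 |].
      assert (0 < Cmod cN) by (apply Cmod_gt_0, HcN).
      pose proof (sum_n_m_Cmod_ge0 c m n). lra.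
    + apply smallR0_le_root_modulus_pow with (N := N); lia || assumption.
  - apply le_Rpower_inv; [apply Cmod_ge_0 | | lia |].
    + unfold bigR1. eapply Rlt_le_trans; [apply Rlt_0_1 | apply Rmax_l].
    + apply root_modulus_pow_le_bigR1; lia || assumption.
Qed.
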